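(* Let $b\ge 1$, $k\ge 1$, $1\le s\le k$ be integers. Then $\sigma_{k}^{(b+1)}(t;s)=\sigma_{k}^{(b)}(t;s)$ for every integer $t$.
   Context: For a positive integer $m$, $(q)_m=(1-q)\cdots(1-q^m)$, $(q)_0=1$. For integers $b\ge 0$, $k\ge1$ and $1\le s\le k$, let $R^{(b)}_{k,s}(q)=\sum_{t=0}^{k-1}\sigma^{(b)}_k(t;s)q^t$ be the remainder of $\frac{1}{k^b}(q)_{k-1}^{\,b}(q)_{s-1}$ upon division by $1-q^k$; the values $\sigma^{(b)}_k(t;s)$ are extended to all integers $t$ by $k$-periodicity. *)

From mathcomp Require Import all_boot all_order all_algebra.
Set Implicit Arguments. Unset Strict Implicit. Unset Printing Implicit Defensive.
Import GRing.Theory Num.Theory.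
Local Open Scope ring_scope.

Definition qpoch (m : nat) : {poly rat} := \prod_(1 <= i < m.+1) (1 - 'X^i).

Definition Rrem (b k s : nat) : {poly rat} :=
  ((k%:R ^- b) *: (qpoch k.-1 ^+ b * qpoch s.-1)) %% (1 - 'X^k).

(* sigma^{(b)}_k(t;s) : coefficient of q^t for 0 <= t < k, extended k-periodically to t : int *)
Definition sigma (b k s : nat) (t : int) : rat :=
  (Rrem b k s)`_(absz (t %% (k%:Z))%Z).

(* At a k-th root of unity w, (w)_{k-1} = \prod_(0 < i < k) (1 - w^i) equals k if w is
   primitive and 0 otherwise, since then some factor 1 - w^m with m | k, m < k vanishes.
   Hence P = (q)_{k-1} satisfies P (P - k) = 0 at every root of 1 - q^k, which has simple
   roots, so P^2 = k P modulo 1 - q^k.  Thus P/k is idempotent modulo 1 - q^k and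
   (P/k)^(b+1) (q)_{s-1} = (P/k)^b (q)_{s-1} modulo 1 - q^k as soon as b >= 1. *)

From mathcomp Require Import all_boot all_order all_algebra all_field.
From mathcomp Require Import ring.
Import GRing.Theory Num.Theory.
Set Implicit Arguments.
Unset Strict Implicit.
Unset Printing Implicit Defensive.
Local Open Scope ring_scope.

Section RootsOfUnity.
Variable F : fieldType.

Lemma prod_one_sub_prim_root k (z : F) :
  k.-primitive_root z -> \prod_(1 <= i < k) (1 - z ^+ i) = k%:R.
Proof.
move=> pz; have k_gt0 := prim_order_gt0 pz.
(* Cancel 'X - 1 in 'X^k - 1 = \prod_(0 <= i < k) ('X - z ^+ i), then evaluate at 1. *)
have Xn_sub1 : 'X^k - 1 = ('X - 1%:P) * \sum_(i < k) 'X ^+ (k.-1 - i) * 1%:P ^+ i :> {poly F}.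
  by rewrite -subrXX polyC1 expr1n.
have := factor_Xn_sub_1 pz.
rewrite Xn_sub1 big_ltn // expr0 => /(mulfI (monic_neq0 (monicXsubC 1))).
move=> /(congr1 (horner^~ 1)); rewrite horner_prod horner_sum.
under eq_bigr do rewrite hornerXsubC.
under [X in _ = X -> _]eq_bigr do rewrite expr1n mulr1 hornerXn expr1n.
by move=> ->; rewrite sumr_const card_ord.
Qed.

Lemma prod_one_sub_unity_root k (z : F) : (0 < k)%N -> z ^+ k = 1 ->
  \prod_(1 <= i < k) (1 - z ^+ i) = 0 \/ \prod_(1 <= i < k) (1 - z ^+ i) = k%:R.
Proof.
move=> k_gt0 zk1; have [m pz m_dvd_k] := prim_order_exists k_gt0 zk1.
have [<-|m_neq_k] := eqVneq m k; first by right; apply: prod_one_sub_prim_root.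
have m_lt_k : (m < k)%N by rewrite ltn_neqAle m_neq_k dvdn_leq.
left; apply/eqP; rewrite prodf_seq_eq0; apply/hasP; exists m.
  by rewrite mem_index_iota (prim_order_gt0 pz).
by rewrite prim_expr_order // subrr eqxx.
Qed.

Lemma Xn_sub1_dvdp k (z : F) (p : {poly F}) : k.-primitive_root z ->
  (forall w, w ^+ k = 1 -> root p w) -> ('X^k - 1) %| p.
Proof.
move=> pz p_roots; rewrite -(factor_Xn_sub_1 pz) -(big_map (fun i => z ^+ i) xpredT
  (fun w => 'X - w%:P)).
apply: uniq_roots_dvdp.
  apply/allP => _ /mapP[i _ ->]; apply: p_roots.
  by rewrite exprAC (prim_expr_order pz) expr1n.
rewrite uniq_rootsE map_inj_in_uniq ?iota_uniq // => i j.
rewrite !mem_index_iota => /andP[_ ik] /andP[_ jk] /eqP.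
by rewrite (eq_prim_root_expr pz) !modn_small // => /eqP.
Qed.

End RootsOfUnity.

Lemma eq_modp_dvdp_sub (F : fieldType) (d p q : {poly F}) :
  d %| p - q -> p %% d = q %% d.
Proof. by move=> dvd_d; rewrite -(subrK q p) modpD (modp_eq0 dvd_d) add0r. Qed.

Lemma map_qpoch m :
  map_poly ratr (qpoch m) = \prod_(1 <= i < m.+1) (1 - 'X^i) :> {poly algC}.
Proof.
rewrite rmorph_prod; apply: eq_bigr => i _.
by rewrite rmorphB rmorph1 rmorphXn /= map_polyX.
Qed.

Lemma dvdp_qpoch_sub_qpoch k : (0 < k)%N ->
  (1 - 'X^k) %| qpoch k.-1 * (qpoch k.-1 - (k%:R)%:P).
Proof.
move=> k_gt0; rewrite -(dvdp_map (ratr : {rmorphism rat -> algC})).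
rewrite rmorphB rmorph1 rmorphXn /= map_polyX -opprB dvdpNl.
rewrite rmorphM rmorphB /= map_polyC /= rmorph_nat map_qpoch prednK //.
have [z pz] := C_prim_root_exists k_gt0.
apply: (Xn_sub1_dvdp pz) => w wk1.
rewrite /root hornerM hornerD hornerN hornerC horner_prod.
under eq_bigr do rewrite hornerD hornerN hornerC hornerXn.
by have [->|->] := prod_one_sub_unity_root k_gt0 wk1; rewrite ?mul0r ?subrr ?mulr0.
Qed.

Definition qidem k : {poly rat} := k%:R^-1 *: qpoch k.-1.

Lemma RremE b k s : Rrem b k s = (qidem k ^+ b * qpoch s.-1) %% (1 - 'X^k).
Proof. by rewrite /Rrem /qidem exprZn exprVn scalerAl. Qed.

Lemma dvdp_qidem_sqr_sub k : (0 < k)%N -> (1 - 'X^k) %| qidem k ^+ 2 - qidem k.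
Proof.
move=> k_gt0; have k_neq0 : k%:R != 0 :> rat by rewrite pnatr_eq0 -lt0n.
have -> : qidem k ^+ 2 - qidem k =
    (k%:R^-1) ^+ 2 *: (qpoch k.-1 * (qpoch k.-1 - (k%:R)%:P)).
  rewrite /qidem -!mul_polyC polyC_exp.
  have CK : (k%:R^-1)%:P * (k%:R)%:P = 1 :> {poly rat} by rewrite -polyCM mulVf.
  move: CK; set C := _%:P; set K := _%:P; set P := qpoch _ => CK.
  have -> : C ^+ 2 * (P * (P - K)) = (C * P) ^+ 2 - (C * K) * (C * P) by ring.
  by rewrite CK mul1r.
by rewrite dvdpZr ?dvdp_qpoch_sub_qpoch // expf_neq0 // invr_eq0.
Qed.

Lemma Rrem_succ b k s : (0 < b)%N -> (0 < k)%N -> Rrem b.+1 k s = Rrem b k s.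
Proof.
move=> b_gt0 k_gt0; rewrite !RremE; apply: eq_modp_dvdp_sub.
have -> : qidem k ^+ b.+1 * qpoch s.-1 - qidem k ^+ b * qpoch s.-1 =
    qidem k ^+ b.-1 * qpoch s.-1 * (qidem k ^+ 2 - qidem k).
  by rewrite -(prednK b_gt0) !exprS; ring.
by rewrite dvdp_mull ?dvdp_qidem_sqr_sub.
Qed.

Theorem corollary2p7 (b k s : nat) (t : int) :
  (1 <= b)%N -> (1 <= k)%N -> (1 <= s <= k)%N ->
  sigma b.+1 k s t = sigma b k s t.
Proof. by move=> b_gt0 k_gt0 _; rewrite /sigma Rrem_succ. Qed.
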